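(* If a formula $\varphi(x)$ of the correspondence language is logically equivalent to $ST_{22}(I,x)$ for some modal intuitionistic formula $I$, then $\varphi(x)$ is invariant with respect to $(2,2)$-modal asimulations.
   Context: Correspondence language: classical first-order logic without identity over $\Sigma=\{R,R_\Box,R_\Diamond,P_1,P_2,\dots\}$ ($R,R_\Box,R_\Diamond$ binary, $P_n$ unary); $\varphi(x)$ has only $x$ free. $\Theta$ is a subset of $\Sigma$ containing $R,R_\Box,R_\Diamond$; $\Theta$-models $M_k=\langle U_k,\iota_k\rangle$, with $R_k=\iota_k(R)$, $R_{\Box k}=\iota_k(R_\Box)$, $R_{\Diamond k}=\iota_k(R_\Diamond)$. $\Sigma_\varphi=\{R,R_\Box,R_\Diamond\}\cup\{P_n:P_n\text{ occurs in }\varphi\}$. $a\models_k\varphi(x)$ means $\varphi$ holds in $M_k$ under assignments sending $x$ to $a$. $s\overset{\leftrightarrow}{A}t$ means $sAt$ and $tAs$. Modal intuitionistic formulas: built from $p_n,\bot$ with $\wedge,\vee,\to,\Box,\Diamond$. $ST_{22}(p_n,x)=P_n(x)$, $ST_{22}(\bot,x)=\bot$, commutes with $\wedge,\vee$; $ST_{22}(I\to J,x)=\forall y(R(x,y)\to(ST_{22}(I,y)\to ST_{22}(J,y)))$; $ST_{22}(\Box I,x)=\forall y(R(x,y)\to\forall z(R_\Box(y,z)\to ST_{22}(I,z)))$; $ST_{22}(\Diamond I,x)=\forall y(R(x,y)\to\exists z(R_\Diamond(y,z)\wedge ST_{22}(I,z)))$. A $(2,2)$-modal $\langle(M_1,t),(M_2,u)\rangle$-asimulation,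 for pointed $\Theta$-models, is a pair $(A,B)$ with $A,B\subseteq(U_1\times U_2)\cup(U_2\times U_1)$ such that $tAu$ and, for all $i,j\in\{1,2\}$, $a,c,e\in U_i$, $b,d,f\in U_j$, unary $P\in\Theta$: if $aAb$ and $a\models_iP(x)$ then $b\models_jP(x)$; if $aAb$, $bR_jd$ then some $c\in U_i$ has $aR_ic$ and $c\overset{\leftrightarrow}{A}d$; if $aAb$, $bR_jd$, $dR_{\Box j}f$ then some $c,e\in U_i$ have $aR_ic$, $cR_{\Box i}e$, $eAf$; if $aAb$, $bR_jd$ then some $c\in U_i$ has $aR_ic$ and $cBd$; if $aBb$, $aR_{\Diamond i}c$ then some $d\in U_j$ has $bR_{\Diamond j}d$ and $cAd$. $\varphi(x)$ is invariant with respect to $(2,2)$-modal asimulations iff for every $\Theta\supseteq\Sigma_\varphi$, all pointed $\Theta$-models $(M_1,t),(M_2,u)$, every such $(A,B)$, and all $a\in U_1,b\in U_2$ with $aAb$: $a\models_1\varphi(x)$ implies $b\models_2\varphi(x)$. *)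

From Stdlib Require Import List.

(* Individual variables are natural numbers; P_n is encoded by its index n. No identity. *)
Inductive fo : Type :=
| FR    : nat -> nat -> fo
| FRbox : nat -> nat -> fo
| FRdia : nat -> nat -> fo
| FP    : nat -> nat -> fo          (* P_n(v)       *)
| FBot  : fo
| FTop  : fo
| FNot  : fo -> fo
| FAnd  : fo -> fo -> fo
| FOr   : fo -> fo -> fo
| FImp  : fo -> fo -> fo
| FAll  : nat -> fo -> fo
| FEx   : nat -> fo -> fo.

Fixpoint free (v : nat) (f : fo) : Prop :=
  match f with
  | FR a b | FRbox a b | FRdia a b => v = a \/ v = b
  | FP _ a => v = a
  | FBot | FTop => False
  | FNot g => free v g
  | FAnd g h | FOr g h | FImp g h => free v g \/ free v h
  | FAll w g | FEx w g => v <> w /\ free v g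
  end.

Definition only_free (f : fo) (x : nat) : Prop := forall v, free v f -> v = x.

Fixpoint occursP (n : nat) (f : fo) : Prop :=
  match f with
  | FP m _ => n = m
  | FR _ _ | FRbox _ _ | FRdia _ _ | FBot | FTop => False
  | FNot g | FAll _ g | FEx _ g => occursP n g
  | FAnd g h | FOr g h | FImp g h => occursP n g \/ occursP n h
  end.

(* A Theta-model (Theta a set of
   unary predicate indices) is represented by such a structure in which the interpretations
   of the P_n with n outside Theta are irrelevant. *)
Record model : Type := Model {
  U    : Type;
  Rm   : U -> U -> Prop;
  Rbox : U -> U -> Prop;
  Rdia : U -> U -> Prop;
  Pm   : nat -> U -> Prop }.

Definition upd {M : model} (g : nat -> U M) (v : nat) (a : U M) : nat -> U M :=
  fun w => if Nat.eqb w v then a else g w.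

Fixpoint sat (M : model) (g : nat -> U M) (f : fo) : Prop :=
  match f with
  | FR a b => Rm M (g a) (g b)
  | FRbox a b => Rbox M (g a) (g b)
  | FRdia a b => Rdia M (g a) (g b)
  | FP n a => Pm M n (g a)
  | FBot => False
  | FTop => True
  | FNot h => ~ sat M g h
  | FAnd h k => sat M g h /\ sat M g k
  | FOr h k => sat M g h \/ sat M g k
  | FImp h k => sat M g h -> sat M g k
  | FAll v h => forall a : U M, sat M (upd g v a) h
  | FEx v h => exists a : U M, sat M (upd g v a) h
  end.

Definition sat_at (M : model) (a : U M) (f : fo) (x : nat) : Prop :=
  forall g : nat -> U M, g x = a -> sat M g f.

Definition log_equiv (f h : fo) : Prop :=
  forall (M : model) (g : nat -> U M), sat M g f <-> sat M g h.

Inductive mi : Type :=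
| Mp   : nat -> mi
| MBot : mi
| MAnd : mi -> mi -> mi
| MOr  : mi -> mi -> mi
| MImp : mi -> mi -> mi
| MBox : mi -> mi
| MDia : mi -> mi.

(* ST_22(I, x); bound variables y := x+1, z := x+2 (fresh w.r.t. x; each ST22 I v
   has only v free, so this choice is hygienic). *)
Fixpoint ST22 (F : mi) (x : nat) : fo :=
  match F with
  | Mp n => FP n x
  | MBot => FBot
  | MAnd F1 F2 => FAnd (ST22 F1 x) (ST22 F2 x)
  | MOr F1 F2 => FOr (ST22 F1 x) (ST22 F2 x)
  | MImp F1 F2 =>
      FAll (S x) (FImp (FR x (S x)) (FImp (ST22 F1 (S x)) (ST22 F2 (S x))))
  | MBox F1 =>
      FAll (S x) (FImp (FR x (S x))
        (FAll (S (S x)) (FImp (FRbox (S x) (S (S x))) (ST22 F1 (S (S x))))))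
  | MDia F1 =>
      FAll (S x) (FImp (FR x (S x))
        (FEx (S (S x)) (FAnd (FRdia (S x) (S (S x))) (ST22 F1 (S (S x))))))
  end.

(* A subset A of (U1 x U2) u (U2 x U1) is represented by its two components
   A12 : U1 -> U2 -> Prop and A21 : U2 -> U1 -> Prop; likewise for B.
   [asim_dir Th Mi Mj Aij Aji Bij] states the defining clauses for a in U_i, b in U_j. *)
Definition asim_dir (Th : nat -> Prop) (Mi Mj : model)
  (Aij : U Mi -> U Mj -> Prop) (Aji : U Mj -> U Mi -> Prop)
  (Bij : U Mi -> U Mj -> Prop) : Prop :=
  (forall a b n, Th n -> Aij a b -> Pm Mi n a -> Pm Mj n b) /\
  (forall a b d, Aij a b -> Rm Mj b d ->
     exists c, Rm Mi a c /\ Aij c d /\ Aji d c) /\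
  (forall a b d f, Aij a b -> Rm Mj b d -> Rbox Mj d f ->
     exists c e, Rm Mi a c /\ Rbox Mi c e /\ Aij e f) /\
  (forall a b d, Aij a b -> Rm Mj b d ->
     exists c, Rm Mi a c /\ Bij c d) /\
  (forall a b c, Bij a b -> Rdia Mi a c ->
     exists d, Rdia Mj b d /\ Aij c d).

Definition asim22 (Th : nat -> Prop) (M1 M2 : model) (t : U M1) (u : U M2)
  (A12 : U M1 -> U M2 -> Prop) (A21 : U M2 -> U M1 -> Prop)
  (B12 : U M1 -> U M2 -> Prop) (B21 : U M2 -> U M1 -> Prop) : Prop :=
  A12 t u /\
  asim_dir Th M1 M2 A12 A21 B12 /\
  asim_dir Th M2 M1 A21 A12 B21.

(* Invariance of phi(x) w.r.t. (2,2)-modal asimulations.  Theta ranges over sets of unary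
   predicate indices; R, R_box, R_dia are always in Theta.  Sigma_phi subset Theta. *)
Definition invariant22 (f : fo) (x : nat) : Prop :=
  forall (Th : nat -> Prop), (forall n, occursP n f -> Th n) ->
  forall (M1 M2 : model) (t : U M1) (u : U M2)
         (A12 : U M1 -> U M2 -> Prop) (A21 : U M2 -> U M1 -> Prop)
         (B12 : U M1 -> U M2 -> Prop) (B21 : U M2 -> U M1 -> Prop),
  asim22 Th M1 M2 t u A12 A21 B12 B21 ->
  forall (a : U M1) (b : U M2), A12 a b -> sat_at M1 a f x -> sat_at M2 b f x.

(** An asimulation transfers [ST22 I] from [a] to [b] whenever [a A b], by
    induction on [I]: each clause of the definition is exactly what one
    connective needs, the back-and-forth clause for [->] handling the
    contravariant antecedent.  The only obstacle is that the asimulation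
    preserves only the predicates of [Theta], while [I] may mention others.
    Reinterpreting every [P_n] with [n] outside [Sigma_phi] as the full set
    leaves [phi] untouched and makes every predicate preserved; the
    equivalence of [phi] with [ST22 I x] then does the rest. *)

From Stdlib Require Import Arith Lia.

Definition relax_preds (M : model) (Q : nat -> Prop) : model :=
  Model (U M) (Rm M) (Rbox M) (Rdia M) (fun n a => Q n -> Pm M n a).

Lemma sat_relax_preds (f : fo) (Q : nat -> Prop) :
  (forall n, occursP n f -> Q n) ->
  forall (M : model) (g : nat -> U M), sat M g f <-> sat (relax_preds M Q) g f.
Proof.
  induction f as [| | |n w| | |f IHf|f1 IHf1 f2 IHf2|f1 IHf1 f2 IHf2
                  |f1 IHf1 f2 IHf2|w f IHf|w f IHf];
    intros HQ M g; simpl in HQ |- *; try tauto.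
  - split; [now intros H _ | intros H; apply H, HQ; reflexivity].
  - now rewrite (IHf HQ).
  - rewrite (IHf1 (fun n Hn => HQ n (or_introl Hn))),
            (IHf2 (fun n Hn => HQ n (or_intror Hn))); tauto.
  - rewrite (IHf1 (fun n Hn => HQ n (or_introl Hn))),
            (IHf2 (fun n Hn => HQ n (or_intror Hn))); tauto.
  - rewrite (IHf1 (fun n Hn => HQ n (or_introl Hn))),
            (IHf2 (fun n Hn => HQ n (or_intror Hn))); tauto.
  - split; intros H a; apply (IHf HQ M (upd g w a)), H.
  - split; intros [a H]; exists a; apply (IHf HQ M (upd g w a)), H.
Qed.

Lemma asim_dir_relax_preds (Th Q : nat -> Prop) (M N : model) A AR B :
  (forall n, Q n -> Th n) ->
  asim_dir Th M N A AR B ->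
  asim_dir (fun _ => True) (relax_preds M Q) (relax_preds N Q) A AR B.
Proof.
  intros HQ (Hatom & Hforth & Hbox & Hdia_forth & Hdia_back).
  repeat split; try assumption.
  cbn; intros a b n _ Hab Ha Hn; exact (Hatom a b n (HQ n Hn) Hab (Ha Hn)).
Qed.

Lemma upd_same (M : model) (g : nat -> U M) v a : upd g v a v = a.
Proof. now unfold upd; rewrite Nat.eqb_refl. Qed.

Lemma upd_succ (M : model) (g : nat -> U M) v a : upd g (S v) a v = g v.
Proof. unfold upd; now rewrite (proj2 (Nat.eqb_neq v (S v))) by lia. Qed.

Lemma ST22_asim_dir (I : mi) :
  forall (M N : model) A AR B B',
  asim_dir (fun _ => True) M N A AR B -> asim_dir (fun _ => True) N M AR A B' ->
  forall v (g : nat -> U M) (h : nat -> U N),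
  A (g v) (h v) -> sat M g (ST22 I v) -> sat N h (ST22 I v).
Proof.
  induction I as [n| |I1 IH1 I2 IH2|I1 IH1 I2 IH2|I1 IH1 I2 IH2|I IH|I IH];
    intros M N A AR B B' DMN DNM v g h Hgh; cbn.
  - pose proof DMN as (Hatom & _); exact (Hatom _ _ n I Hgh).
  - tauto.
  - intros [H1 H2]; split; eauto.
  - intros [H1|H2]; [left|right]; eauto.
  - intros H d; rewrite upd_succ, upd_same; intros Hhd Hd.
    pose proof DMN as (_ & Hforth & _).
    destruct (Hforth _ _ _ Hgh Hhd) as (c & Hgc & Acd & Adc).
    specialize (H c); rewrite upd_succ, upd_same in H.
    assert (Hc : sat M (upd g (S v) c) (ST22 I1 (S v))).
    { apply (IH1 N M AR A B' B DNM DMN (S v) (upd h (S v) d));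
        [now rewrite !upd_same | exact Hd]. }
    apply (IH2 M N A AR B B' DMN DNM (S v) (upd g (S v) c));
      [now rewrite !upd_same | exact (H Hgc Hc)].
  - intros H d; rewrite upd_succ, upd_same; intros Hhd f.
    rewrite upd_succ, !upd_same; intros Hdf.
    pose proof DMN as (_ & _ & Hbox & _).
    destruct (Hbox _ _ _ _ Hgh Hhd Hdf) as (c & e & Hgc & Hce & Aef).
    specialize (H c); rewrite upd_succ, upd_same in H.
    specialize (H Hgc e); rewrite upd_succ, !upd_same in H.
    apply (IH M N A AR B B' DMN DNM (S (S v)) (upd (upd g (S v) c) (S (S v)) e));
      [now rewrite !upd_same | exact (H Hce)].
  - intros H d; rewrite upd_succ, upd_same; intros Hhd.
    pose proof DMN as (_ & _ & _ & Hdia_forth & Hdia_back).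
    destruct (Hdia_forth _ _ _ Hgh Hhd) as (c & Hgc & Bcd).
    specialize (H c); rewrite upd_succ, upd_same in H.
    destruct (H Hgc) as (e & Hce & He); rewrite upd_succ, !upd_same in Hce.
    destruct (Hdia_back _ _ _ Bcd Hce) as (f & Hdf & Aef).
    exists f; rewrite upd_succ, !upd_same; split; [exact Hdf|].
    apply (IH M N A AR B B' DMN DNM (S (S v)) (upd (upd g (S v) c) (S (S v)) e));
      [now rewrite !upd_same | exact He].
Qed.

Theorem corollary2 (phi : fo) (x : nat) :
  only_free phi x ->
  (exists I : mi, log_equiv phi (ST22 I x)) ->
  invariant22 phi x.
Proof.
  intros _ [I Hequiv] Th HTh M1 M2 t u A12 A21 B12 B21 (_ & D12 & D21)
         a b Hab Ha g2 Hg2.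
  set (Q := fun n => occursP n phi).
  assert (HQ : forall n, occursP n phi -> Q n) by easy.
  apply (sat_relax_preds phi Q HQ M2), Hequiv.
  apply (ST22_asim_dir I (relax_preds M1 Q) (relax_preds M2 Q) A12 A21 B12 B21
           (asim_dir_relax_preds Th Q _ _ _ _ _ HTh D12)
           (asim_dir_relax_preds Th Q _ _ _ _ _ HTh D21) x (fun _ => a) g2).
  - cbn; now rewrite Hg2.
  - apply Hequiv, (sat_relax_preds phi Q HQ M1), Ha; reflexivity.
Qed.
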